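(* Let $p=(p_1,\dots,p_n)$ be a sequence of positive integers, let $k=\min_i p_i$, and let $A,B\subseteq S_p$ be a cross-intersecting pair of families. Then $|A|\cdot|B|\le |S_p|^2/k^2$. Equality holds for $A=B=\{x\in S_p : x_i=j\}$ whenever $i\in[n]$ satisfies $p_i=k$ and $j\in[k]$. If $k\neq 2$, these are the only cross-intersecting pairs $(A,B)$ attaining equality.
   Context: For a positive integer $m$, $[m]=\{1,\dots,m\}$. For a sequence of positive integers $p=(p_1,\dots,p_n)$, $S_p=[p_1]\times\cdots\times[p_n]$; its elements are called vectors. Two vectors $x,y\in S_p$ are $r$-intersecting if $|\{i\in[n]: x_i=y_i\}|\ge r$. Two families $A,B\subseteq S_p$ are $r$-cross-intersecting if every $x\in A$ and $y\in B$ are $r$-intersecting; ''cross-intersecting'' means $1$-cross-intersecting. *)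

From HB Require Import structures.
From mathcomp Require Import all_boot all_order all_algebra.
Set Implicit Arguments. Unset Strict Implicit. Unset Printing Implicit Defensive.

(* S_p = [p_1] x ... x [p_n]; coordinates are 0-indexed: [p_i] is 'I_(p i). *)
Definition vec (n : nat) (p : 'I_n -> nat) : finType :=
  {dffun forall i : 'I_n, 'I_(p i)}.

Definition r_intersecting n (p : 'I_n -> nat) (r : nat) (x y : vec p) : bool :=
  r <= #|[set i : 'I_n | x i == y i]|.

Definition r_cross_intersecting n (p : 'I_n -> nat) (r : nat)
  (A B : {set vec p}) : Prop :=
  forall x y, x \in A -> y \in B -> r_intersecting r x y.

Definition cross_intersecting n (p : 'I_n -> nat) (A B : {set vec p}) : Prop :=
  r_cross_intersecting 1 A B.

(* k = min_i p_i, for n >= 1 written as n.+1 coordinates *)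
Definition pmin n (p : 'I_n.+1 -> nat) : nat := \big[minn/p ord0]_(i < n.+1) p i.

Definition dictator n (p : 'I_n -> nat) (i : 'I_n) (j : 'I_(p i)) : {set vec p} :=
  [set x : vec p | x i == j].

From HB Require Import structures.
From mathcomp Require Import all_boot all_order all_algebra.
From mathcomp Require Import ring lra zify.
Import Order.TTheory GRing.Theory Num.Theory.
Set Implicit Arguments. Unset Strict Implicit. Unset Printing Implicit Defensive.
Local Open Scope ring_scope.

(* The disjointness matrix [D x y = prod_i (1 - [x_i = y_i])] of [S_p] is
   diagonalised by the tensor-product eigenspaces [E_t], [t] a subset of the
   coordinates, with eigenvalues [lambda_t = prod_(i in t) (-1) *
   prod_(i notin t) (p_i - 1)]; for [t] non-empty, [(k - 1) |lambda_t|] is at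
   most the top eigenvalue [lambda_0]. For cross-intersecting [A], [B] the form
   [1_A^T D 1_B] vanishes, and a weighted Hoffman argument then yields
   [(k - 1)^2 |A| |B| <= (N - |A|) (N - |B|)] with [N = |S_p|], which is
   equivalent to [k^2 |A| |B| <= N^2]. At equality every estimate is tight:
   [|A| = |B| = N / k], [1_A = 1_B], and for [k >= 3] only eigenspaces
   [E_{j}] with [p_j = k] carry components of [1_A]. Then [1_A] depends on a
   single coordinate, and an intersecting family that does is a dictator. *)

Lemma sumr_delta (R : pzSemiRingType) (T : finType) (a : T) (G : T -> R) :
  \sum_(c : T) (a == c)%:R * G c = G a.
Proof.
rewrite (bigD1 a) //= eqxx mul1r big1 ?addr0 // => c /negbTE.
by rewrite eq_sym => ->; rewrite mul0r.
Qed.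

Lemma sum_delta_affine_mul (R : comPzRingType) (T : finType) (a e : T)
    (u v u' v' : R) :
  \sum_(c : T) ((a == c)%:R * u + v) * ((c == e)%:R * u' + v') =
  (a == e)%:R * (u * u') + (u * v' + v * u' + #|T|%:R * (v * v')).
Proof.
rewrite (eq_bigr (fun c => (a == c)%:R * (((c == e)%:R * u' + v') * u) +
   ((e == c)%:R * (v * u') + v * v'))); last first.
  by move=> c _; rewrite [(e == c)]eq_sym; ring.
rewrite big_split /= sumr_delta big_split /= sumr_delta sumr_const -mulr_natl.
ring.
Qed.

Lemma sum_prod_vec (R : comPzSemiRingType) n (p : 'I_n -> nat)
    (F : forall i, 'I_(p i) -> R) :
  \sum_(x : vec p) \prod_i F i (x i) = \prod_i \sum_(c : 'I_(p i)) F i c.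
Proof.
rewrite (reindex (@dffun_of_fprod _ (fun i => 'I_(p i)))); last first.
  by apply: onW_bij; apply: dffun_of_fprod_bij.
pose P_ i := [ffun c : 'I_(p i) => F i c].
transitivity (\sum_(t : fprod (fun i => 'I_(p i))) \prod_(i in 'I_n) P_ i (t i)).
  by apply: eq_bigr => t _; apply: eq_bigr => i _; rewrite /P_ !ffunE.
rewrite big_fprod -(bigA_distr_big_dep _ (fun i j => untag 0 (P_ i) j)).
apply: eq_bigr => i _; rewrite -(big_tag P_ i).
by apply: eq_bigr => c _; rewrite /P_ ffunE.
Qed.

Lemma prodr_ge1 (R : numDomainType) (I : finType) (P : pred I) (E : I -> R) :
  (forall i, P i -> 1 <= E i) -> 1 <= \prod_(i | P i) E i.
Proof.
move=> E_ge1.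
have := @ler_prod _ _ (index_enum I) P (fun=> 1) E; rewrite big1 //; apply=> i Pi.
by rewrite ler01 E_ge1.
Qed.

Lemma ge0_of_abs_bounds (R : realDomainType) (d m l S Z : R) :
  `|Z| <= S -> 0 <= m -> m * `|l| <= d -> 0 <= d * S + m * l * Z.
Proof.
move=> ZS m_ge0 ml_le; have S_ge0 := le_trans (normr_ge0 Z) ZS.
have : m * `|l| * `|Z| <= d * S.
  by apply: ler_pM => //; rewrite ?mulr_ge0.
have := ler_norm (- (m * l * Z)); rewrite normrN !normrM (ger0_norm m_ge0).
lra.
Qed.

Lemma discriminant_le (R : realFieldType) (a b c : R) :
  0 <= a -> 0 <= c -> (forall u v, 2 * u * v * b <= u ^+ 2 * a + v ^+ 2 * c) ->
  b ^+ 2 <= a * c.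
Proof.
move=> a_ge0 c_ge0 H.
have [c_gt0 | c_le0] := ltrP 0 c.
  rewrite -(ler_pM2l c_gt0); have := H c b; nra.
have c0 : c = 0 by lra.
have [a_gt0 | a_le0] := ltrP 0 a.
  rewrite -(ler_pM2l a_gt0); have := H b a; nra.
have : b = 0 by have := H 1 1; have := H 1 (-1); rewrite sqrrN !expr1n; lra.
by move->; rewrite c0 mulr0 expr2 mulr0.
Qed.

(* With [M := N^2 - k (k - 2) ab >= N (a + b)], the product below equals
   [M^2 - 4 ab N^2 >= N^2 ((a + b)^2 - 4 ab)]. *)
Lemma complement_product_key (R : realFieldType) (N a b k : R) :
  0 < a -> 0 < b -> 0 < N -> 2 <= k ->
  (k - 1) ^+ 2 * (a * b) <= (N - a) * (N - b) ->
  0 < N ^+ 2 - (k - 2) ^+ 2 * (a * b) /\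
  N ^+ 2 * (a - b) ^+ 2 <=
    (N ^+ 2 - k ^+ 2 * (a * b)) * (N ^+ 2 - (k - 2) ^+ 2 * (a * b)).
Proof.
move=> a_gt0 b_gt0 N_gt0 k_ge2 H.
set M := N ^+ 2 - k * (k - 2) * (a * b).
have M_ge : N * (a + b) <= M by rewrite /M; nra.
split.
  have : (k - 2) ^+ 2 * (a * b) <= k * (k - 2) * (a * b).
    by apply: ler_wpM2r; nra.
  rewrite /M in M_ge; nra.
have -> : (N ^+ 2 - k ^+ 2 * (a * b)) * (N ^+ 2 - (k - 2) ^+ 2 * (a * b)) =
          M ^+ 2 - 4 * (a * b) * N ^+ 2 by rewrite /M; ring.
have : (N * (a + b)) ^+ 2 <= M ^+ 2 by rewrite ler_sqr ?nnegrE; nra.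
nra.
Qed.

Lemma mul_le_sqr_of_complement (R : realFieldType) (N a b k : R) :
  0 < a -> 0 < b -> 0 < N -> 2 <= k ->
  (k - 1) ^+ 2 * (a * b) <= (N - a) * (N - b) ->
  k ^+ 2 * (a * b) <= N ^+ 2.
Proof.
move=> a_gt0 b_gt0 N_gt0 k_ge2 /(complement_product_key a_gt0 b_gt0 N_gt0 k_ge2).
case=> pos key.
by rewrite -subr_ge0 -(pmulr_lge0 _ pos) (le_trans _ key) // mulr_ge0 ?sqr_ge0.
Qed.

Lemma mul_eq_sqr_of_complement (R : realFieldType) (N a b k : R) :
  0 < a -> 0 < b -> 0 < N -> 2 <= k ->
  (k - 1) ^+ 2 * (a * b) <= (N - a) * (N - b) ->
  k ^+ 2 * (a * b) = N ^+ 2 -> a = b /\ k * a = N.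
Proof.
move=> a_gt0 b_gt0 N_gt0 k_ge2 /(complement_product_key a_gt0 b_gt0 N_gt0 k_ge2).
case=> _ key E; rewrite E subrr mul0r pmulr_rle0 ?exprn_gt0 // in key.
have ab : a = b.
  by apply/eqP; rewrite -subr_eq0 -(sqrf_eq0 (a - b)) eq_le key sqr_ge0.
split=> //; subst b; apply/eqP.
have k_ge0 : 0 <= k by lra.
rewrite -(eqrXn2 (ltn0Sn 1)) ?(ltW N_gt0) ?mulr_ge0 ?(ltW a_gt0) //.
by rewrite exprMn -E expr2.
Qed.

Lemma bool_diff_eq (R : realDomainType) (b1 b2 b3 b4 : bool) :
  (b1%:R - b2%:R : R) = b3%:R - b4%:R -> (b1%:R - b2%:R : R) != 0 -> b1 = b3.
Proof.
by case: b1; case: b2; case: b3; case: b4 => //=;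
  rewrite ?subrr ?subr0 ?sub0r ?eqxx; lra.
Qed.

Lemma leq_mul_eq_sqr a b N :
  (a <= N -> b <= N -> a * b = N ^ 2 -> a = N /\ b = N)%N.
Proof.
move=> aN bN E.
have [N0|N_gt0] := posnP N.
  by move: aN bN; rewrite N0 !leqn0 => /eqP-> /eqP->.
have := leq_mul (leqnn a) bN; have := leq_mul aN (leqnn N).
have := leq_mul aN (leqnn b).
by split; nia.
Qed.

Section Coordinates.
Variables (n : nat) (p : 'I_n -> nat).
Local Notation V := (vec p).

Definition set_coord (x : V) (j : 'I_n) (c : 'I_(p j)) : V :=
  finfun (dfwith (fun i => x i) c).

Lemma set_coord_same (x : V) j (c : 'I_(p j)) : set_coord x c j = c.
Proof. by rewrite ffunE dfwith_in. Qed.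

Lemma set_coord_other (x : V) j (c : 'I_(p j)) l :
  j != l -> set_coord x c l = x l.
Proof. by move=> ne; rewrite ffunE dfwith_out. Qed.

Lemma exists_avoiding_vec (y : V) :
  (forall l, 1 < p l)%N -> exists z : V, forall l, z l != y l.
Proof.
move=> p_gt1.
have avoid l : exists c : 'I_(p l), c != y l.
  apply/existsP; apply: contraT; rewrite negb_exists => /forallP all_eq.
  have : (#|'I_(p l)| <= #|[set y l]|)%N.
    by apply: subset_leq_card; apply/subsetP => c _; rewrite inE; apply: negbNE.
  by rewrite card_ord cards1 leqNgt p_gt1.
have [z Hz] := @fin_all_exists _ (fun l => 'I_(p l)) (fun l c => c != y l) avoid.
by exists (finfun z) => l; rewrite ffunE Hz.
Qed.

Lemma not_intersecting_of_avoiding (x y : V) :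
  (forall l, x l != y l) -> ~~ r_intersecting 1 x y.
Proof.
move=> H; rewrite /r_intersecting card_gt0 negbK; apply/eqP/setP => i.
by rewrite inE in_set0 (negbTE (H i)).
Qed.

Lemma dictator_of_cylinder (A : {set V}) (j : 'I_n) (x0 : V) :
  (forall l, 1 < p l)%N -> cross_intersecting A A -> x0 \in A ->
  (forall x y : V, x j = y j -> (x \in A) = (y \in A)) -> A = dictator (x0 j).
Proof.
move=> p_gt1 intA x0A cylA; apply/setP => y; rewrite inE.
have [yj|yj] := eqVneq (y j) (x0 j); first by rewrite (cylA _ _ yj).
apply/negbTE/negP => yA.
have [z Hz] := exists_avoiding_vec y p_gt1.
have zA : set_coord z (x0 j) \in A by rewrite (cylA _ x0) ?set_coord_same.
have := intA _ _ zA yA; apply/negP/not_intersecting_of_avoiding => l.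
have [<-|jl] := eqVneq j l; first by rewrite set_coord_same eq_sym.
by rewrite set_coord_other.
Qed.

Lemma card_dictator j (c : 'I_(p j)) : (#|dictator c| * p j)%N = #|V|.
Proof.
pose f (xd : V * 'I_(p j)) := set_coord xd.1 xd.2.
have f_inj : {in setX (dictator c) [set: 'I_(p j)] &, injective f}.
  move=> [x d] [x' d'] /setXP[/= + _] /setXP[/= + _].
  rewrite /dictator !inE /f /= => /eqP xc /eqP x'c E.
  have dd' : d = d' by rewrite -(set_coord_same x d) E set_coord_same.
  subst d'; congr (_, _); apply/ffunP => l.
  have [<-|jl] := eqVneq j l; first by rewrite xc x'c.
  by rewrite -(set_coord_other x d jl) E set_coord_other.
rewrite -cardsT -(card_ord (p j)) -cardsT -cardsX -(card_in_imset f_inj).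
apply: eq_card => y; rewrite inE; apply/imsetP; exists (set_coord y c, y j).
  by rewrite inE /= /dictator !inE set_coord_same eqxx.
rewrite /f /=; apply/ffunP => l.
have [<-|jl] := eqVneq j l; first by rewrite set_coord_same.
by rewrite !set_coord_other.
Qed.

Lemma dictator_setT i (j : 'I_(p i)) : p i = 1%N -> dictator j = [set: V].
Proof.
move=> pi1; apply/setP => x; rewrite !inE; apply/eqP/val_inj => /=.
have := ltn_ord (x i); have := ltn_ord j.
by move: (nat_of_ord j) (nat_of_ord (x i)); rewrite pi1; lia.
Qed.

End Coordinates.

Section Spectrum.
Variables (R : realFieldType) (n : nat) (p : 'I_n -> nat).
Hypothesis p_gt0 : forall i, (0 < p i)%N.
Local Notation V := (vec p).
Local Notation index := {ffun 'I_n -> bool}.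

(* The eigenspace of [disjmx] with index [t] is spanned by the products over
   [i] of functions of [x_i] that have mean zero when [t i] and are constant
   otherwise; [coord_proj i (t i)] is the factor of its projection matrix. *)
Definition coord_proj i (b : bool) (a c : 'I_(p i)) : R :=
  (a == c)%:R * b%:R + (-1) ^+ b / (p i)%:R.

Definition eigenproj (t : index) (x y : V) : R :=
  \prod_i coord_proj (t i) (x i) (y i).

Definition disjmx (x y : V) : R := \prod_i (1 - (x i == y i)%:R).

Definition eigenvalue (t : index) : R :=
  \prod_i (if t i then -1 else (p i)%:R - 1).

Definition component (t : index) (h : V -> R) (x : V) : R :=
  \sum_y eigenproj t x y * h y.

Definition comp_dot (t : index) (h g : V -> R) : R :=
  \sum_x component t h x * component t g x.

Definition index0 : index := [ffun=> false].

Definition index1 (j : 'I_n) : index := [ffun i => i == j].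

Definition vol : R := \prod_i (p i)%:R.

Lemma pnatr_neq0 i : (p i)%:R != 0 :> R.
Proof. by rewrite pnatr_eq0 -lt0n p_gt0. Qed.

Lemma prod_eq_indicator (x y : V) :
  \prod_i ((x i == y i)%:R : R) = (x == y)%:R.
Proof.
have [->|neq] := eqVneq x y; first by rewrite big1 // => i _; rewrite eqxx.
have [i Hi|H] := pickP (fun i => x i != y i).
  by rewrite (bigD1 i) //= (negbTE Hi) mul0r.
by case/eqP: neq; apply/ffunP => i; move: (H i) => /negbFE/eqP.
Qed.

Lemma sum_eigenproj (x y : V) : \sum_t eigenproj t x y = (x == y)%:R.
Proof.
rewrite /eigenproj -(bigA_distr_bigA (fun i b => coord_proj b (x i) (y i))).
rewrite -prod_eq_indicator; apply: eq_bigr => i _.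
by rewrite big_bool /coord_proj /=; ring.
Qed.

Lemma eigenprojC t (x y : V) : eigenproj t x y = eigenproj t y x.
Proof. by apply: eq_bigr => i _; rewrite /coord_proj eq_sym. Qed.

Lemma eigenproj_idem t (x y : V) :
  \sum_z eigenproj t x z * eigenproj t z y = eigenproj t x y.
Proof.
pose F i c := coord_proj (t i) (x i) c * coord_proj (t i) c (y i).
rewrite /eigenproj (eq_bigr (fun z : V => \prod_i F i (z i))); last first.
  by move=> z _; rewrite big_split.
rewrite sum_prod_vec /F.
apply: eq_bigr => i _; rewrite /coord_proj sum_delta_affine_mul card_ord.
by have := pnatr_neq0 i; case: (t i) => /= ?; field.
Qed.

Lemma disjmx_eigenproj t (x y : V) :
  \sum_z disjmx x z * eigenproj t z y = eigenvalue t * eigenproj t x y.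
Proof.
pose F i c := (1 - (x i == c)%:R) * coord_proj (t i) c (y i).
rewrite /eigenproj /disjmx /eigenvalue -big_split /=.
rewrite (eq_bigr (fun z : V => \prod_i F i (z i))); last first.
  by move=> z _; rewrite big_split.
rewrite sum_prod_vec /F.
apply: eq_bigr => i _.
rewrite (eq_bigr (fun c => ((x i == c)%:R * (-1) + 1) * coord_proj (t i) c (y i)));
  last by move=> c _; ring.
rewrite /coord_proj sum_delta_affine_mul card_ord.
by have := pnatr_neq0 i; case: (t i) => /= ?; field.
Qed.

Lemma sum_component h (x : V) : \sum_t component t h x = h x.
Proof.
rewrite /component exchange_big /=.
under eq_bigr do rewrite -mulr_suml sum_eigenproj.
exact: sumr_delta.
Qed.

Lemma comp_dotE t h g : comp_dot t h g = \sum_x h x * component t g x.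
Proof.
rewrite /comp_dot /component.
transitivity (\sum_x \sum_y h y * (eigenproj t y x * \sum_z eigenproj t x z * g z)).
  apply: eq_bigr => x _; rewrite mulr_suml; apply: eq_bigr => y _.
  by rewrite eigenprojC; ring.
rewrite exchange_big /=; apply: eq_bigr => y _; rewrite -mulr_sumr; congr (_ * _).
transitivity (\sum_x \sum_z eigenproj t y x * eigenproj t x z * g z).
  by apply: eq_bigr => x _; rewrite mulr_sumr; apply: eq_bigr => z _; ring.
rewrite exchange_big /=; apply: eq_bigr => z _.
by rewrite -(eigenproj_idem t y z) mulr_suml.
Qed.

Lemma sum_comp_dot h g : \sum_t comp_dot t h g = \sum_x h x * g x.
Proof.
under eq_bigr do rewrite comp_dotE.
rewrite exchange_big /=; apply: eq_bigr => x _.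
by rewrite -mulr_sumr sum_component.
Qed.

Lemma disjmx_form f g :
  \sum_x \sum_y f x * disjmx x y * g y = \sum_t eigenvalue t * comp_dot t f g.
Proof.
transitivity (\sum_t \sum_x \sum_y \sum_z f x * disjmx x y * eigenproj t y z * g z).
  symmetry; rewrite exchange_big /=; apply: eq_bigr => x _.
  rewrite exchange_big /=; apply: eq_bigr => y _.
  rewrite -[g y]sum_component /component !mulr_sumr; apply: eq_bigr => t _.
  by rewrite mulr_sumr; apply: eq_bigr => z _; ring.
apply: eq_bigr => t _; rewrite comp_dotE mulr_sumr; apply: eq_bigr => x _.
rewrite /component mulr_sumr mulr_sumr exchange_big /=; apply: eq_bigr => z _.
transitivity (f x * (\sum_y disjmx x y * eigenproj t y z) * g z).
  by rewrite mulr_sumr mulr_suml; apply: eq_bigr => y _; ring.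
by rewrite disjmx_eigenproj; ring.
Qed.

Lemma vol_gt0 : 0 < vol.
Proof. by apply: prodr_gt0 => i _; rewrite ltr0n p_gt0. Qed.

Lemma card_vec : #|V|%:R = vol.
Proof.
rewrite -sumr_const.
transitivity (\sum_(x : V) \prod_(i < n) (1 : R)).
  by apply: eq_bigr => x _; rewrite big1.
rewrite (sum_prod_vec (fun i (c : 'I_(p i)) => (1 : R))).
by apply: eq_bigr => i _; rewrite sumr_const card_ord.
Qed.

Lemma component_index0 h (x : V) : component index0 h x = vol^-1 * \sum_y h y.
Proof.
rewrite /component mulr_sumr; apply: eq_bigr => y _; congr (_ * _).
rewrite /eigenproj /vol -prodfV; apply: eq_bigr => i _.
by rewrite ffunE /coord_proj /=; ring.
Qed.

Lemma comp_dot_index0 h g :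
  comp_dot index0 h g = vol^-1 * (\sum_y h y) * (\sum_y g y).
Proof.
rewrite /comp_dot; under eq_bigr do rewrite !component_index0.
rewrite sumr_const -mulr_natl card_vec.
by have := lt0r_neq0 vol_gt0 => ?; field.
Qed.

Lemma index_neq0 t : t != index0 -> exists j, t j.
Proof.
move=> nt; have [j tj|H] := pickP (fun j => t j); first by exists j.
by case/eqP: nt; apply/ffunP => j; rewrite ffunE H.
Qed.

Lemma index1_neq0 j : index1 j != index0.
Proof. by apply/eqP => /ffunP /(_ j); rewrite !ffunE eqxx. Qed.

Lemma sum_component_eq0 t h : t != index0 -> \sum_x component t h x = 0.
Proof.
move=> /index_neq0 [j tj].
rewrite /component exchange_big /= big1 // => y _; rewrite -mulr_suml.
rewrite /eigenproj (sum_prod_vec (fun i c => coord_proj (t i) c (y i))).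
rewrite (bigD1 j) //=.
rewrite /coord_proj tj /=.
under eq_bigr do rewrite eq_sym.
rewrite big_split /= sumr_delta sumr_const card_ord -mulr_natr.
rewrite [X in X * _ * _](_ : _ = 0) ?mul0r //.
by have := pnatr_neq0 j => ?; rewrite expr1; field.
Qed.

Lemma component_index1 j h (x x' : V) :
  x j = x' j -> component (index1 j) h x = component (index1 j) h x'.
Proof.
move=> E; apply: eq_bigr => y _; congr (_ * _); apply: eq_bigr => i _.
rewrite ffunE; have [->|ne] := eqVneq i j; first by rewrite E.
by rewrite /coord_proj /= !mulr0.
Qed.

Lemma componentB t f g (x : V) :
  component t (fun y => f y - g y) x = component t f x - component t g x.
Proof. by rewrite /component -sumrB; apply: eq_bigr => y _; ring. Qed.

Lemma comp_dot_quad t f g (u v : R) :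
  0 <= u ^+ 2 * comp_dot t f f + v ^+ 2 * comp_dot t g g +
       2 * u * v * comp_dot t f g.
Proof.
have : 0 <= \sum_x (u * component t f x + v * component t g x) ^+ 2.
  by apply: sumr_ge0 => x _; apply: sqr_ge0.
rewrite (eq_bigr (fun x => u ^+ 2 * (component t f x * component t f x) +
   v ^+ 2 * (component t g x * component t g x) +
   2 * u * v * (component t f x * component t g x))); last by move=> x _; ring.
by rewrite !big_split /= -!mulr_sumr.
Qed.

Lemma comp_dot_eq0 t h : comp_dot t h h = 0 -> forall x, component t h x = 0.
Proof.
move=> H x.
have sqr_comp_ge0 y : true -> 0 <= component t h y * component t h y.
  by rewrite -expr2 sqr_ge0.
have /eqP := psumr_eq0P sqr_comp_ge0 H (i := x) isT.
by rewrite mulf_eq0 orbb => /eqP.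
Qed.

End Spectrum.

Arguments index0 {n}.
Arguments index1 {n}.
Arguments disjmx {R n p}.
Arguments eigenvalue {R n p}.

Section Hoffman.
Variables (R : realFieldType) (n : nat) (p : 'I_n -> nat).
Hypothesis p_gt0 : forall i, (0 < p i)%N.
Variable k : nat.
Hypotheses (k_ge2 : (2 <= k)%N) (k_le_p : forall i, (k <= p i)%N).
Local Notation V := (vec p).
Local Notation index := {ffun 'I_n -> bool}.
Local Notation eigenvalue := (@eigenvalue R n p).
Local Notation vol := (@vol R n p).

Lemma natr_k_ge2 : 2 <= k%:R :> R.
Proof. by rewrite (ler_nat _ 2 k). Qed.

Lemma pnatr_k_ge i : k%:R <= (p i)%:R :> R.
Proof. by rewrite ler_nat k_le_p. Qed.

Lemma pnatr_sub1_ge1 i : 1 <= (p i)%:R - 1 :> R.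
Proof. have := pnatr_k_ge i; have := natr_k_ge2; lra. Qed.

Definition eigen_cofactor (t : index) : R :=
  \prod_i (if t i then (p i)%:R - 1 else 1).

Lemma eigen_cofactor_ge1 t (P : pred 'I_n) :
  1 <= \prod_(i | P i) (if t i then (p i)%:R - 1 else 1) :> R.
Proof. by apply: prodr_ge1 => i _; case: (t i); rewrite ?pnatr_sub1_ge1. Qed.

Lemma eigenvalue_index0_factor t :
  eigenvalue index0 = eigen_cofactor t * `|eigenvalue t|.
Proof.
rewrite normr_prod -big_split /=; apply: eq_bigr => i _; rewrite ffunE.
case: (t i); first by rewrite normrN normr1 mulr1.
by rewrite mul1r ger0_norm //; have := pnatr_sub1_ge1 i; lra.
Qed.

Lemma eigenvalue_index0_gt0 : 0 < eigenvalue index0.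
Proof.
apply: prodr_gt0 => i _; rewrite ffunE.
by have := pnatr_sub1_ge1 i; lra.
Qed.

Lemma eigen_cofactor_ge t : t != index0 -> k%:R - 1 <= eigen_cofactor t.
Proof.
move=> /index_neq0 [j tj]; rewrite /eigen_cofactor (bigD1 j) //= tj.
have := eigen_cofactor_ge1 t (fun i => i != j).
have := pnatr_k_ge j; have := natr_k_ge2; nra.
Qed.

Lemma norm_eigenvalue_le t :
  t != index0 -> (k%:R - 1) * `|eigenvalue t| <= eigenvalue index0.
Proof.
move=> nt; rewrite (eigenvalue_index0_factor t) ler_wpM2r ?normr_ge0 //.
exact: eigen_cofactor_ge.
Qed.

Lemma norm_eigenvalue_eq t : (3 <= k)%N -> t != index0 ->
  (k%:R - 1) * `|eigenvalue t| = eigenvalue index0 ->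
  exists j, t = index1 j /\ p j = k.
Proof.
move=> k_ge3 nt; rewrite (eigenvalue_index0_factor t) => /mulIf.
have eig_neq0 : `|eigenvalue t| != 0.
  apply: contraTneq eigenvalue_index0_gt0 => e0.
  by rewrite (eigenvalue_index0_factor t) e0 mulr0 ltxx.
move=> /(_ eig_neq0); move: nt => /index_neq0 [j tj].
rewrite /eigen_cofactor (bigD1 j) //= tj.
have := eigen_cofactor_ge1 t (fun i => i != j).
set rest := \prod_(i | i != j) _ => rest_ge1 E.
have k_ge3' : 3 <= k%:R :> R by rewrite (ler_nat _ 3 k).
have pj := pnatr_k_ge j.
have rest1 : rest = 1 by nra.
exists j; split.
  apply/ffunP => l; rewrite ffunE; have [->//|ne] := eqVneq l j.
  apply/negbTE/negP => tl; move: rest1; rewrite /rest (bigD1 l) //= tl.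
  have := eigen_cofactor_ge1 t (fun i => (i != j) && (i != l)).
  have := pnatr_k_ge l; nra.
by apply/eqP; rewrite -(eqr_nat R); apply/eqP; nra.
Qed.

Lemma eigenvalue_index1_le0 j : eigenvalue (index1 j) <= 0.
Proof.
rewrite /eigenvalue (bigD1 j) //= ffunE eqxx mulN1r oppr_le0.
apply: prodr_ge0 => i /negbTE ne; rewrite ffunE ne.
by have := pnatr_sub1_ge1 i; lra.
Qed.

Definition hoffman_slack (f g : V -> R) (u v : R) (t : index) : R :=
  eigenvalue index0 * (u ^+ 2 * comp_dot t f f + v ^+ 2 * comp_dot t g g) +
  (k%:R - 1) * eigenvalue t * (2 * u * v * comp_dot t f g).

Lemma hoffman_slack_ge0 f g u v t : t != index0 -> 0 <= hoffman_slack f g u v t.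
Proof.
move=> nt; apply: ge0_of_abs_bounds; last exact: norm_eigenvalue_le.
  have := comp_dot_quad t f g u v; have := comp_dot_quad t f g u (- v).
  rewrite sqrrN => Hm Hp; rewrite ler_norml; apply/andP; split; lra.
by have := natr_k_ge2; lra.
Qed.

(* Split off the trivial eigenspace in [sum_comp_dot] and [disjmx_form]. *)
Lemma sum_hoffman_slack f g u v :
  \sum_x \sum_y f x * disjmx x y * g y = 0 ->
  \sum_(t | t != index0) hoffman_slack f g u v t =
  eigenvalue index0 * (u ^+ 2 * (\sum_x f x * f x - comp_dot index0 f f) +
                       v ^+ 2 * (\sum_x g x * g x - comp_dot index0 g g)) -
  (k%:R - 1) * eigenvalue index0 * (2 * u * v * comp_dot index0 f g).
Proof.
move=> form0; pose F := hoffman_slack f g u v.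
have total : \sum_t F t = eigenvalue index0 *
      (u ^+ 2 * (\sum_x f x * f x) + v ^+ 2 * (\sum_x g x * g x)) +
    (k%:R - 1) * (2 * u * v) * (\sum_t eigenvalue t * comp_dot t f g).
  rewrite -!(sum_comp_dot p_gt0) /F /hoffman_slack big_split /=; congr (_ + _).
    by rewrite -mulr_sumr big_split /= -!mulr_sumr.
  by rewrite mulr_sumr; apply: eq_bigr => t _; ring.
rewrite -(disjmx_form p_gt0) form0 mulr0 addr0 in total.
have -> : \sum_(t | t != index0) F t = \sum_t F t - F index0.
  by rewrite [\sum_t F t](bigD1 index0) //= addrC addrK.
by rewrite total /F /hoffman_slack; ring.
Qed.

(* Either the eigenvalue bound is strict at [t], and then both components
   vanish, or [t = index1 j] with [eigenvalue t < 0], and then the slack is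
   a multiple of [comp_dot t (f - g) (f - g)]. *)
Lemma hoffman_slack_eq0 f g t : (3 <= k)%N -> t != index0 ->
  hoffman_slack f g 1 1 t = 0 ->
  (forall x, component t f x = component t g x) /\
  ((forall x, component t f x = 0) \/ exists j, t = index1 j /\ p j = k).
Proof.
move=> k_ge3 nt; rewrite /hoffman_slack !expr1n !mul1r !mulr1 => slack0.
have eig_le := norm_eigenvalue_le nt.
have Qff := comp_dot_quad t f f 1 0; have Qgg := comp_dot_quad t g g 1 0.
have Qp := comp_dot_quad t f g 1 1; have Qm := comp_dot_quad t f g 1 (-1).
rewrite sqrrN !expr1n !expr0n /= !mul1r !mul0r !mulr0 ?addr0 in Qff Qgg Qp Qm.
have k1 : 0 <= k%:R - 1 :> R by have := natr_k_ge2; lra.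
have [eig_lt|eig_ge] := ltrP ((k%:R - 1) * `|eigenvalue t|) (eigenvalue index0).
  have slack_ge := ge0_of_abs_bounds (S := comp_dot t f f + comp_dot t g g)
    (Z := 2 * comp_dot t f g) (l := eigenvalue t)
    ltac:(rewrite ler_norml; lra) k1 (lexx _).
  have Q0 : comp_dot t f f + comp_dot t g g = 0 by nra.
  have Qf0 : comp_dot t f f = 0 by lra.
  have Qg0 : comp_dot t g g = 0 by lra.
  split; last by left; apply: comp_dot_eq0.
  by move=> x; rewrite (comp_dot_eq0 Qf0) (comp_dot_eq0 Qg0).
have eig_eq : (k%:R - 1) * `|eigenvalue t| = eigenvalue index0.
  by apply/eqP; rewrite eq_le eig_le eig_ge.
have [j [tj pj]] := norm_eigenvalue_eq k_ge3 nt eig_eq.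
split; last by right; exists j.
have eig_le0 : eigenvalue t <= 0 by rewrite tj; apply: eigenvalue_index1_le0.
rewrite ler0_norm // in eig_eq.
have eig0 := eigenvalue_index0_gt0.
have Qdiff : comp_dot t (fun y => f y - g y) (fun y => f y - g y) = 0.
  have -> : comp_dot t (fun y => f y - g y) (fun y => f y - g y) =
      comp_dot t f f + comp_dot t g g - 2 * comp_dot t f g.
    rewrite /comp_dot (eq_bigr (fun x => component t f x * component t f x +
      component t g x * component t g x - 2 * (component t f x * component t g x))).
      by rewrite !big_split /= sumrN -mulr_sumr.
    by move=> x _; rewrite !componentB; ring.
  nra.
by move=> x; apply/eqP; rewrite -subr_eq0 -componentB (comp_dot_eq0 Qdiff).
Qed.

End Hoffman.

Section CrossIntersecting.
Variables (R : realFieldType) (n : nat) (p : 'I_n -> nat).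
Hypothesis p_gt0 : forall i, (0 < p i)%N.
Local Notation V := (vec p).
Local Notation vol := (@vol R n p).

Definition indicator (A : {set V}) (x : V) : R := (x \in A)%:R.

Lemma sum_indicator (A : {set V}) : \sum_x indicator A x = #|A|%:R.
Proof.
rewrite -sumr_const [RHS]big_mkcond.
by apply: eq_bigr => x _; rewrite /indicator; case: (x \in A).
Qed.

Lemma sum_indicator_sqr (A : {set V}) :
  \sum_x indicator A x * indicator A x = #|A|%:R.
Proof.
rewrite -sum_indicator; apply: eq_bigr => x _.
by rewrite /indicator; case: (x \in A); rewrite ?mul1r ?mul0r.
Qed.

Lemma card_le_vol (A : {set V}) : #|A|%:R <= vol.
Proof. by rewrite -(card_vec R p) ler_nat max_card. Qed.

Lemma disjmx_form_cross (A B : {set V}) : cross_intersecting A B ->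
  \sum_x \sum_y indicator A x * disjmx x y * indicator B y = 0.
Proof.
move=> AB; apply: big1 => x _; apply: big1 => y _.
rewrite /indicator; case xA: (x \in A); last by rewrite !mul0r.
case yB: (y \in B); last by rewrite mulr0.
have := AB x y xA yB; rewrite /r_intersecting card_gt0 => /set0Pn [i].
rewrite inE => /eqP E; rewrite /disjmx (bigD1 i) //= E eqxx subrr.
by rewrite mul0r mulr0 mul0r.
Qed.

(* Moving coordinate [j] leaves the constant component and the components
   [index1 l], [l != j], unchanged, so the jumps of [1_A] along coordinate [j]
   are those of its [index1 j] component, which is not constant along [j]. *)
Lemma cylinder_of_components (A : {set V}) j :
  (forall t, t != index0 ->
     (forall x, component t (indicator A) x = 0) \/ exists l, t = index1 l) ->
  (exists x, component (index1 j) (indicator A) x != 0) ->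
  forall x y : V, x j = y j -> (x \in A) = (y \in A).
Proof.
move=> comps [x1 phi_x1] x y xy.
pose phi := component (index1 j) (indicator A).
have diff z (c : 'I_(p j)) :
    indicator A z - indicator A (set_coord z c) = phi z - phi (set_coord z c).
  rewrite -!(sum_component (indicator A)) -sumrB (bigD1 (index1 j)) //=.
  rewrite big1 ?addr0 // => t tj.
  have [->|nt] := eqVneq t index0; first by rewrite !component_index0 subrr.
  have [zero|[l tl]] := comps t nt; first by rewrite !zero subrr.
  rewrite tl (@component_index1 _ _ _ l _ _ (set_coord z c)) ?subrr //.
  by rewrite set_coord_other //; apply: contraNneq tj => ->; rewrite tl.
have [c phi_c] : exists c : 'I_(p j), phi (set_coord x c) != phi x.
  apply/existsP; apply: contraTT phi_x1; rewrite negb_exists => /forallP phi_cst.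
  have cst z : phi z = phi x.
    rewrite -(eqP (negbNE (phi_cst (z j)))); apply: component_index1.
    by rewrite set_coord_same.
  have := sum_component_eq0 p_gt0 (indicator A) (index1_neq0 j).
  under eq_bigr do rewrite -/phi cst.
  rewrite sumr_const -mulr_natl (card_vec R p) => /eqP.
  by rewrite mulf_eq0 (negbTE (lt0r_neq0 (vol_gt0 R p_gt0))) /= -/phi cst negbK.
apply: (@bool_diff_eq R _ (set_coord x c \in A) _ (set_coord y c \in A)).
  rewrite -!/(indicator A _) !diff; congr (_ - _); first exact: component_index1.
  by apply: component_index1; rewrite !set_coord_same.
by rewrite -!/(indicator A _) diff subr_eq0 eq_sym.
Qed.

Section Bound.
Variable k : nat.
Hypotheses (k_ge2 : (2 <= k)%N) (k_le_p : forall i, (k <= p i)%N).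

Lemma cross_hoffman (A B : {set V}) u v : cross_intersecting A B ->
  2 * u * v * (k%:R - 1) * (#|A|%:R * #|B|%:R) <=
  u ^+ 2 * #|A|%:R * (vol - #|A|%:R) + v ^+ 2 * #|B|%:R * (vol - #|B|%:R).
Proof.
move=> AB; set a : R := #|A|%:R; set b : R := #|B|%:R.
have : 0 <= \sum_(t | t != index0)
              hoffman_slack k (indicator A) (indicator B) u v t.
  by apply: sumr_ge0 => t; apply: hoffman_slack_ge0.
rewrite (sum_hoffman_slack p_gt0 k) ?(disjmx_form_cross AB) //.
rewrite !(comp_dot_index0 p_gt0) !sum_indicator_sqr !sum_indicator -/a -/b.
have vol_neq0 := lt0r_neq0 (vol_gt0 R p_gt0).
have eig_gt0 := eigenvalue_index0_gt0 R k_ge2 k_le_p.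
set d := eigenvalue index0.
have -> : d * (u ^+ 2 * (a - vol^-1 * a * a) + v ^+ 2 * (b - vol^-1 * b * b)) -
    (k%:R - 1) * d * (2 * u * v * (vol^-1 * a * b)) =
    d / vol * (u ^+ 2 * a * (vol - a) + v ^+ 2 * b * (vol - b) -
               2 * u * v * (k%:R - 1) * (a * b)) by field.
by rewrite pmulr_rge0 ?subr_ge0 // divr_gt0 ?(vol_gt0 R p_gt0).
Qed.

Lemma cross_complement_bound (A B : {set V}) : cross_intersecting A B ->
  0 < #|A|%:R :> R -> 0 < #|B|%:R :> R ->
  (k%:R - 1) ^+ 2 * (#|A|%:R * #|B|%:R) <=
  (vol - #|A|%:R) * (vol - #|B|%:R) :> R.
Proof.
move=> AB; set a : R := #|A|%:R; set b : R := #|B|%:R => a_gt0 b_gt0.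
have := card_le_vol A; have := card_le_vol B; rewrite -/a -/b => bN aN.
have K_le : ((k%:R - 1) * a * b) ^+ 2 <= a * (vol - a) * (b * (vol - b)).
  apply: discriminant_le; rewrite ?mulr_ge0 ?subr_ge0 ?(ltW a_gt0) ?(ltW b_gt0) //.
  by move=> u v; have := cross_hoffman u v AB; rewrite -/a -/b; lra.
rewrite -(ler_pM2r (mulr_gt0 a_gt0 b_gt0)).
have -> : (k%:R - 1) ^+ 2 * (a * b) * (a * b) = ((k%:R - 1) * a * b) ^+ 2 by ring.
by have -> : (vol - a) * (vol - b) * (a * b) = a * (vol - a) * (b * (vol - b))
  by ring.
Qed.

Lemma cross_card_bound (A B : {set V}) : cross_intersecting A B ->
  k%:R ^+ 2 * (#|A|%:R * #|B|%:R) <= vol ^+ 2 :> R.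
Proof.
move=> AB; have [->|a_gt0] := posnP #|A|; first by rewrite mul0r mulr0 sqr_ge0.
have [->|b_gt0] := posnP #|B|; first by rewrite !mulr0 sqr_ge0.
rewrite -(ltr0n R) in a_gt0; rewrite -(ltr0n R) in b_gt0.
exact: mul_le_sqr_of_complement a_gt0 b_gt0 (vol_gt0 R p_gt0) (natr_k_ge2 R k_ge2)
  (cross_complement_bound AB a_gt0 b_gt0).
Qed.

Lemma cross_card_eq (A B : {set V}) : cross_intersecting A B ->
  k%:R ^+ 2 * (#|A|%:R * #|B|%:R) = vol ^+ 2 :> R ->
  #|A|%:R = #|B|%:R :> R /\ k%:R * #|A|%:R = vol :> R.
Proof.
move=> AB E; have vol_gt0 := vol_gt0 R p_gt0.
have : (0 < #|A| * #|B|)%N.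
  rewrite lt0n; apply/eqP => ab0; move: E.
  rewrite -natrM ab0 mulr0 => /esym/eqP.
  by rewrite sqrf_eq0 (negbTE (lt0r_neq0 vol_gt0)).
rewrite muln_gt0 -(ltr0n R) -[(0 < #|B|)%N](ltr0n R) => /andP[a_gt0 b_gt0].
exact: mul_eq_sqr_of_complement a_gt0 b_gt0 vol_gt0 (natr_k_ge2 R k_ge2)
  (cross_complement_bound AB a_gt0 b_gt0) E.
Qed.

(* At equality the total slack [sum_hoffman_slack] at [u = v = 1] is zero. *)
Lemma cross_extremal_components (A B : {set V}) :
  (3 <= k)%N -> cross_intersecting A B ->
  k%:R ^+ 2 * (#|A|%:R * #|B|%:R) = vol ^+ 2 :> R ->
  forall t, t != index0 ->
    (forall x, component t (indicator A) x = component t (indicator B) x) /\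
    ((forall x, component t (indicator A) x = 0) \/
     exists j, t = index1 j /\ p j = k).
Proof.
move=> k_ge3 AB E t nt; have [ab ka] := cross_card_eq AB E.
apply: (hoffman_slack_eq0 k_ge2 k_le_p k_ge3 nt).
have k_neq0 : k%:R != 0 :> R by rewrite pnatr_eq0 -lt0n (ltn_trans _ k_ge2).
have a_neq0 : #|A|%:R != 0 :> R.
  by apply: contraTneq (vol_gt0 R p_gt0) => a0; rewrite -ka a0 mulr0 ltxx.
have sum0 : \sum_(t | t != index0)
    hoffman_slack k (indicator A) (indicator B) 1 1 t = 0.
  rewrite (sum_hoffman_slack p_gt0 k) ?(disjmx_form_cross AB) //.
  rewrite !(comp_dot_index0 p_gt0) !sum_indicator_sqr !sum_indicator -ab -ka.
  by field; rewrite a_neq0 k_neq0.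
apply: (psumr_eq0P _ sum0) => // u u_nt.
exact: hoffman_slack_ge0.
Qed.

Lemma cross_extremal_dictator (A B : {set V}) :
  (3 <= k)%N -> cross_intersecting A B ->
  k%:R ^+ 2 * (#|A|%:R * #|B|%:R) = vol ^+ 2 :> R ->
  exists j (c : 'I_(p j)), p j = k /\ A = dictator c /\ B = dictator c.
Proof.
move=> k_ge3 AB E; have [ab ka] := cross_card_eq AB E.
have comps := cross_extremal_components k_ge3 AB E.
have AeqB : A = B.
  apply/setP => x; suff : indicator A x = indicator B x.
    rewrite /indicator => /eqP; rewrite eqr_nat.
    by case: (x \in A); case: (x \in B).
  rewrite -!(sum_component (indicator _) x); apply: eq_bigr => t _.
  have [->|nt] := eqVneq t index0.
    by rewrite !component_index0 !sum_indicator ab.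
  by have [-> _] := comps t nt.
subst B.
have [x0 x0A] : exists x0, x0 \in A.
  apply/set0Pn; rewrite -card_gt0 -(ltr0n R).
  have k_gt0 : 0 < k%:R :> R by rewrite ltr0n (ltn_trans _ k_ge2).
  by rewrite -(pmulr_rgt0 _ k_gt0) ka (vol_gt0 R p_gt0).
have [j pj nz] : exists2 j, p j = k &
    exists x, component (index1 j) (indicator A) x != 0.
  have [j /andP[/eqP pj /existsP nz]|none] := pickP (fun j =>
    (p j == k) && [exists x, component (index1 j) (indicator A) x != 0]).
    by exists j.
  have ind_x0 : indicator A x0 = component index0 (indicator A) x0.
    rewrite -(sum_component (indicator A)) (bigD1 index0) //=.
    rewrite big1 ?addr0 // => t nt.
    have [_ [zero|[l [tl pl]]]] := comps t nt; first exact: zero.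
    move: (none l); rewrite pl eqxx /= => /negbT; rewrite negb_exists.
    by move=> /forallP /(_ x0); rewrite negbK tl => /eqP.
  move: ind_x0; rewrite component_index0 sum_indicator /indicator x0A -ka.
  rewrite invfM -mulrA mulVf ?mulr1; last first.
    by apply: contraTneq (vol_gt0 R p_gt0) => a0; rewrite -ka a0 mulr0 ltxx.
  move=> /(congr1 GRing.inv); rewrite invr1 invrK => k1.
  have : 3%:R <= k%:R :> R by rewrite ler_nat.
  by rewrite -k1; lra.
have p_gt1 l : (1 < p l)%N by apply: leq_trans k_ge2 (k_le_p l).
exists j, (x0 j); rewrite -(dictator_of_cylinder p_gt1 AB x0A) //.
apply: cylinder_of_components nz => t nt.
by have [_ [zero|[l [tl _]]]] := comps t nt; [left | right; exists l].
Qed.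

End Bound.

End CrossIntersecting.

Lemma pmin_le n (p : 'I_n.+1 -> nat) i : (pmin p <= p i)%N.
Proof.
rewrite /pmin; elim: (index_enum _) (mem_index_enum i) => // j r IH.
rewrite big_cons in_cons => /orP[/eqP->|ir]; first exact: geq_minl.
exact: leq_trans (geq_minr _ _) (IH ir).
Qed.

Lemma pmin_attained n (p : 'I_n.+1 -> nat) : exists i, p i = pmin p.
Proof.
rewrite /pmin; elim/big_rec: _ => [|i x _ [j <-]]; first by exists ord0.
by have [_|_] := leqP (p i) (p j); [exists i | exists j].
Qed.

Section MinimumSize.
Variables (n : nat) (p : 'I_n.+1 -> nat).
Hypothesis p_gt0 : forall i, (0 < p i)%N.
Local Notation V := (vec p).
Local Notation k := (pmin p).

Lemma pmin_gt0 : (0 < k)%N.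
Proof. by have [i <-] := pmin_attained p. Qed.

Lemma pmin_cross_bound (A B : {set V}) : cross_intersecting A B ->
  (k ^ 2 * (#|A| * #|B|) <= #|V| ^ 2)%N.
Proof.
move=> AB; have [k_le1|k_ge2] := leqP k 1.
  have -> : k = 1%N by apply/eqP; rewrite eqn_leq k_le1 pmin_gt0.
  by rewrite mul1n leq_mul ?max_card.
rewrite -(ler_nat rat) natrM (natrX _ k) (natrX _ #|V|) natrM (card_vec rat p).
exact: (cross_card_bound rat p_gt0 k_ge2 (pmin_le p) AB).
Qed.

Lemma dictator_cross_extremal i (j : 'I_(p i)) : p i = k ->
  cross_intersecting (dictator j) (dictator j) /\
  (k ^ 2 * (#|dictator j| * #|dictator j|) = #|V| ^ 2)%N.
Proof.
move=> pik; split.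
  move=> x y; rewrite !inE => /eqP xj /eqP yj.
  by rewrite /r_intersecting card_gt0; apply/set0Pn; exists i; rewrite inE xj yj.
by rewrite -(card_dictator j) pik; nia.
Qed.

Lemma pmin_cross_extremal_dictator (A B : {set V}) :
  k != 2%N -> cross_intersecting A B ->
  (k ^ 2 * (#|A| * #|B|) = #|V| ^ 2)%N ->
  exists i (j : 'I_(p i)), p i = k /\ A = dictator j /\ B = dictator j.
Proof.
move=> k_neq2 AB E; have [i0 pi0] := pmin_attained p.
have [k_le1|k_ge2] := leqP k 1.
  have k1 : k = 1%N by apply/eqP; rewrite eqn_leq k_le1 pmin_gt0.
  rewrite k1 mul1n in E.
  have pi1 : p i0 = 1%N by rewrite pi0 k1.
  have full (C : {set V}) : #|C| = #|V| -> C = dictator (Ordinal (p_gt0 i0)).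
    move=> C_full; rewrite dictator_setT //.
    by apply/eqP; rewrite eqEcard subsetT cardsT C_full leqnn.
  have [aV bV] := leq_mul_eq_sqr (max_card (mem A)) (max_card (mem B)) E.
  by exists i0, (Ordinal (p_gt0 i0)); split=> //; split; apply: full.
have k_ge3 : (3 <= k)%N by rewrite ltn_neqAle eq_sym k_neq2 k_ge2.
apply: (@cross_extremal_dictator rat) => //; first exact: pmin_le.
by rewrite -(card_vec rat p) -natrM -(natrX _ k) -(natrX _ #|V|) -natrM E.
Qed.

End MinimumSize.

Theorem theorem1 (n : nat) (p : 'I_n.+1 -> nat) (hp : forall i, (0 < p i)%N) :
  let k := pmin p in
  let bound : rat := ((#|[set: vec p]| ^ 2)%N)%:R / ((k ^ 2)%N)%:R in
  (forall A B : {set vec p}, cross_intersecting A B ->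
     ((#|A| * #|B|)%N)%:R <= bound)
  /\ (forall (i : 'I_n.+1) (j : 'I_(p i)), p i = k ->
        cross_intersecting (dictator j) (dictator j) /\
        ((#|dictator j| * #|dictator j|)%N)%:R = bound)
  /\ (k <> 2%N ->
      forall A B : {set vec p}, cross_intersecting A B ->
        ((#|A| * #|B|)%N)%:R = bound ->
        exists (i : 'I_n.+1) (j : 'I_(p i)),
          p i = k /\ A = dictator j /\ B = dictator j).
Proof.
move=> k bound.
have k2_gt0 : (0 < k ^ 2)%N by rewrite expn_gt0 pmin_gt0.
have bound_le m : (m%:R <= bound) = (k ^ 2 * m <= #|vec p| ^ 2)%N.
  by rewrite /bound cardsT ler_pdivlMr ?ltr0n // -natrM ler_nat mulnC.
have bound_eq m : (m%:R == bound) = (k ^ 2 * m == #|vec p| ^ 2)%N.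
  rewrite /bound cardsT -(divr1 m%:R) eqr_div ?oner_neq0 ?pnatr_eq0 -?lt0n //.
  by rewrite mulr1 -natrM eqr_nat mulnC.
split; first by move=> A B AB; rewrite bound_le pmin_cross_bound.
split.
  move=> i j pik; have [AB E] := dictator_cross_extremal j pik.
  by split=> //; apply/eqP; rewrite bound_eq E.
move=> k_neq2 A B AB /eqP; rewrite bound_eq => /eqP E.
by apply: pmin_cross_extremal_dictator => //; apply/eqP.
Qed.
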